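(* Let $\mathcal{G}$ be an $n$-dimensional real Lie algebra with basis $\{e_i\}_{1\le i\le n}$ and structure constants $[e_i,e_j]=\sum_k c_{ij}^k e_k$, and let $(x_1,\dots,x_n)$ be the linear coordinates on $\mathcal{G}^*$ with respect to the dual basis $\{e^i\}$. Equip $\mathcal{G}^*$ with the Lie-Poisson structure $\pi^{ij}(x_ue^u)=\sum_k c_{ij}^k x_k$ and the volume form $dx_1\wedge\dots\wedge dx_n$. Then a function $f\in C^\infty(\mathcal{G}^* )$ is a last multiplier of its Hamiltonian vector field $A_f$ if and only if $$\sum_{i,j=1}^n c_{ij}^j\frac{\partial f}{\partial x_i}=0.$$
   Context: The Poisson bracket is $\{g,h\}=\sum_{i,j}\pi^{ij}\frac{\partial g}{\partial x_i}\frac{\partial h}{\partial x_j}$, and for $h\in C^\infty(\mathcal{G}^* )$ the Hamiltonian vector field is defined by $A_h(g)=\{h,g\}$. For a vector field $A$, $\operatorname{div}A$ is defined by $L_A V=(\operatorname{div}A)V$ with $V=dx_1\wedge\dots\wedge dx_n$. A function $m$ is a last multiplier of $A$ if $d(m\,i_AV)=0$, equivalently $A(m)+m\operatorname{div}A=0$. *)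

(* R : realType, G^* identified with 'rV[R]_n
   via the linear coordinates x_k = x ord0 k. *)
From HB Require Import structures.
From mathcomp Require Import all_boot all_order all_algebra.
From mathcomp Require Import all_classical all_reals all_analysis.
Set Implicit Arguments. Unset Strict Implicit. Unset Printing Implicit Defensive.
Import Order.TTheory GRing.Theory Num.Theory.
Import numFieldNormedType.Exports.
Local Open Scope ring_scope.

Section Defs.
Variables (R : realType) (n : nat).

(* structure constants: c i j k = c_{ij}^k, i.e. [e_i,e_j] = sum_k c_{ij}^k e_k *)
Definition lie_structure_constants (c : 'I_n -> 'I_n -> 'I_n -> R) : Prop :=
  (forall i j k, c i j k = - c j i k) /\
  (forall i j k m, \sum_(l < n) (c i j l * c l k m + c j k l * c l i m
                                  + c k i l * c l j m) = 0).

Definition coord (i : 'I_n) (x : 'rV[R]_n) : R := x ord0 i.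

Definition partial (i : 'I_n) (g : 'rV[R]_n -> R) : 'rV[R]_n -> R :=
  fun x => 'D_(delta_mx ord0 i : 'rV[R]_n) g x.

Definition iter_partial (s : seq 'I_n) (g : 'rV[R]_n -> R) : 'rV[R]_n -> R :=
  foldr partial g s.

Definition smooth (g : 'rV[R]_n -> R) : Prop :=
  forall (s : seq 'I_n) (x : 'rV[R]_n), differentiable (iter_partial s g) x.

Definition lie_poisson (c : 'I_n -> 'I_n -> 'I_n -> R) (i j : 'I_n)
  (x : 'rV[R]_n) : R := \sum_(k < n) c i j k * coord k x.

Definition poisson_bracket c (g h : 'rV[R]_n -> R) (x : 'rV[R]_n) : R :=
  \sum_(i < n) \sum_(j < n) lie_poisson c i j x * partial i g x * partial j h x.

(* vector fields on G^* given by their components A^j *)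
Definition vfield := 'I_n -> 'rV[R]_n -> R.

(* Hamiltonian vector field A_h, A_h(g) = {h,g}: components A_h^j = sum_i pi^{ij} dh/dx_i *)
Definition ham_vf c (h : 'rV[R]_n -> R) : vfield :=
  fun j x => \sum_(i < n) lie_poisson c i j x * partial i h x.

Definition vf_apply (A : vfield) (g : 'rV[R]_n -> R) (x : 'rV[R]_n) : R :=
  \sum_(j < n) A j x * partial j g x.

(* divergence w.r.t. V = dx_1 /\ ... /\ dx_n: L_A V = (div A) V, i.e.
   div A = sum_j dA^j/dx_j *)
Definition divergence (A : vfield) (x : 'rV[R]_n) : R :=
  \sum_(j < n) partial j (A j) x.

Definition last_multiplier (A : vfield) (m : 'rV[R]_n -> R) : Prop :=
  forall x, vf_apply A m x + m x * divergence A x = 0.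

End Defs.

From Pilot Require Import Defs.
From HB Require Import structures.
From mathcomp Require Import all_boot all_order all_algebra.
From mathcomp Require Import all_classical all_reals all_analysis.
From mathcomp Require Import ring lra.
Import Order.TTheory GRing.Theory Num.Theory.
Import numFieldNormedType.Exports.
Set Implicit Arguments. Unset Strict Implicit. Unset Printing Implicit Defensive.
Local Open Scope ring_scope.
Local Open Scope classical_set_scope.

(* Since the Lie-Poisson tensor is antisymmetric, A_f(f) = sum pi^ij f_i f_j
   vanishes, and by Schwarz's theorem so does the second-order part
   sum pi^ij f_ij of div A_f; as pi^ij is linear with d pi^ij / dx_j = c_ij^j,
   this leaves div A_f = G := sum_ij c_ij^j f_i, so A_f(f) + f div A_f = f G.
   If f G vanishes identically but G(x) <> 0, then by continuity f vanishes
   near x, hence every f_i(x) = 0 and G(x) = 0. *)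

Section Schwarz.
Variables (R : realType) (V : normedModType R).
Implicit Types (g : V -> R) (x u v : V).

Lemma is_derive_line g x v (s : R) : derivable g (s *: v + x) v ->
  is_derive s 1 (fun t : R => g (t *: v + x)) ('D_v g (s *: v + x)).
Proof.
move=> dg.
have quotE : (fun h : R => h^-1 *: (((fun t : R => g (t *: v + x)) \o shift s)
     (h *: 1) - g (s *: v + x))) =
   (fun h : R => h^-1 *: ((g \o shift (s *: v + x)) (h *: v) - g (s *: v + x))).
  by apply/funext => h /=; rewrite [h *: 1]mulr1 scalerDl addrA.
by split; [rewrite /derivable quotE; exact: dg | rewrite /derive quotE].
Qed.

Lemma MVT_from0 (phi dphi : R -> R) (h : R) : 0 < h ->
  (forall s : R, is_derive s 1 phi (dphi s)) ->
  exists2 t, 0 < t < h & phi h - phi 0 = h * dphi t.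
Proof.
move=> h0 dphiP.
have [t] := MVT h0 (fun s _ => dphiP s)
  (derivable_within_continuous (fun s _ => @ex_derive _ _ _ _ _ _ _ (dphiP s))).
by rewrite in_itv /= subr0 mulrC => t_in ->; exists t.
Qed.

Definition second_difference g x u v (h : R) :=
  g (h *: u + (h *: v + x)) - g (h *: u + x) - g (h *: v + x) + g x.

Lemma second_differenceC g x u v :
  second_difference g x u v = second_difference g x v u.
Proof.
apply/funext => h; rewrite /second_difference addrCA.
by congr (_ + _); rewrite addrAC.
Qed.

Lemma second_difference_mvt g x u v (h : R) : 0 < h ->
  (forall y, derivable g y v) -> (forall y, derivable ('D_v g) y u) ->
  exists r t, [/\ 0 < r < h, 0 < t < h &
    second_difference g x u v h = h ^+ 2 * 'D_u ('D_v g) (r *: u + (t *: v + x))].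
Proof.
move=> h0 dg ddg.
have [t t_in Ht] := MVT_from0
  (phi := fun s => g (s *: v + (h *: u + x)) - g (s *: v + x)) h0
  (fun s => is_deriveB (is_derive_line (dg _)) (is_derive_line (dg _))).
have [r r_in Hr] := MVT_from0 (phi := fun s => 'D_v g (s *: u + (t *: v + x)))
  h0 (fun s => is_derive_line (ddg _)).
exists r, t; split => //.
move: Ht Hr; rewrite !scale0r !add0r /second_difference.
rewrite !(addrCA _ (h *: u)) => Ht Hr.
by rewrite expr2 -mulrA -Hr -Ht; ring.
Qed.

Lemma second_difference_cvg g x u v :
  (forall y, derivable g y v) -> (forall y, derivable ('D_v g) y u) ->
  {for x, continuous ('D_u ('D_v g))} ->
  (fun h => h ^- 2 * second_difference g x u v h) @ 0^'+ --> 'D_u ('D_v g) x.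
Proof.
move=> dg ddg Dcont; apply/cvgrPdist_lt => e e0.
have [d /= d0 Dnear] := (nbhs_normP _ _).1 (cvgr_dist_lt _ _ Dcont _ e0).
set k := `|u| + `|v| + 1.
have k0 : 0 < k by rewrite ltr_pwDr.
near=> h.
have h0 : 0 < h by near: h; exact: nbhs_right_gt.
have hk : h * k < d.
  by rewrite -ltr_pdivlMr //; near: h; apply: nbhs_right_lt; rewrite divr_gt0.
have [r [t [/andP[r0 rh] /andP[t0 th] ->]]] := second_difference_mvt x h0 dg ddg.
rewrite mulKf ?expf_neq0 ?gt_eqF //; apply: Dnear.
rewrite /ball_ /= addrA (@opprD V) addrCA subrr addr0 normrN.
rewrite (le_lt_trans (ler_normD _ _)) // !normrZ !ger0_norm ?ltW //.
have := normr_ge0 u; have := normr_ge0 v; rewrite /k in hk; nra.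
Unshelve. all: by end_near. Qed.

Lemma derive_mixedC g x u v :
  (forall y, derivable g y u) -> (forall y, derivable g y v) ->
  (forall y, derivable ('D_v g) y u) -> (forall y, derivable ('D_u g) y v) ->
  {for x, continuous ('D_u ('D_v g))} -> {for x, continuous ('D_v ('D_u g))} ->
  'D_u ('D_v g) x = 'D_v ('D_u g) x.
Proof.
move=> du dv dvu duv cvu cuv.
apply: (cvg_unique (@Rhausdorff R) (second_difference_cvg dv dvu cvu)).
by rewrite /= second_differenceC; exact: second_difference_cvg.
Qed.

End Schwarz.

Lemma is_derive_linear (R : numFieldType) (V W : normedModType R) (L : V -> W)
  (x v : V) : linear L -> is_derive x v L (L v).
Proof.
move=> Llin.
have quot_cvg : (fun h : R => h^-1 *: ((L \o shift x) (h *: v) - L x)) @ 0^' --> L v.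
  apply: cvg_near_cst; near=> h.
  have h_neq0 : h != 0 by near: h; exact: nbhs_dnbhs_neq.
  by rewrite /= Llin addrK scalerA mulVf ?scale1r.
by split; [apply/cvg_ex; exists (L v) | exact: cvg_lim].
Unshelve. all: by end_near. Qed.

Lemma sum_antisym_sym (R : numDomainType) (I : finType) (a s : I -> I -> R) :
  (forall i j, a i j = - a j i) -> (forall i j, s i j = s j i) ->
  \sum_i \sum_j a i j * s i j = 0.
Proof.
move=> a_anti s_sym; apply/eqP; rewrite -eqNr; apply/eqP.
rewrite -sumrN [RHS]exchange_big; apply: eq_bigr => i _.
rewrite -sumrN; apply: eq_bigr => j _.
by rewrite [a j i]a_anti [s j i]s_sym mulNr.
Qed.

Section Smooth.
Variables (R : realType) (n : nat).
Implicit Types (g : 'rV[R]_n -> R) (x : 'rV[R]_n).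

Lemma smooth_differentiable g x : smooth g -> differentiable g x.
Proof. by move=> sg; exact: sg [::] x. Qed.

Lemma smooth_partial g i : smooth g -> smooth (partial i g).
Proof. by move=> sg s; have := sg (s ++ [:: i]); rewrite /iter_partial foldr_cat. Qed.

Lemma smooth_partialC g i j x : smooth g ->
  partial i (partial j g) x = partial j (partial i g) x.
Proof.
move=> sg; have d1 k y : differentiable (partial k g) y.
  exact/smooth_differentiable/smooth_partial.
have d2 k l : differentiable (partial l (partial k g)) x.
  exact/smooth_differentiable/smooth_partial/smooth_partial.
apply: derive_mixedC => [y|y|y|y||].
- exact/diff_derivable/smooth_differentiable.
- exact/diff_derivable/smooth_differentiable.
- exact/diff_derivable/d1.
- exact/diff_derivable/d1.
- exact/differentiable_continuous/d2.
- exact/differentiable_continuous/d2.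
Qed.

Lemma partial_near_eq0 g i x : (\forall y \near x, g y = 0) -> partial i g x = 0.
Proof. by move=> g0; rewrite /partial (near_eq_derive _ (g := cst 0) g0) derive_cst. Qed.

Lemma near_eq0_of_mulr_eq0 (T : topologicalType) (f G : T -> R) (x : T) :
  (forall y, f y * G y = 0) -> {for x, continuous G} -> G x != 0 ->
  \forall y \near x, f y = 0.
Proof.
move=> fG0 Gcont Gx0; near=> y.
have Gy0 : G y != 0 by near: y; exact: cvgr_neq0 Gcont Gx0.
by move/eqP: (fG0 y); rewrite mulf_eq0 (negbTE Gy0) orbF => /eqP.
Unshelve. all: by end_near. Qed.

Lemma partial_comb_eq0 (a : 'I_n -> R) g : smooth g ->
  (forall x, g x * \sum_i a i * partial i g x = 0) ->
  forall x, \sum_i a i * partial i g x = 0.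
Proof.
move=> sg gG0 x; have [//|Gx0] := eqVneq (\sum_i a i * partial i g x) 0.
have Gcont : {for x, continuous (fun y => \sum_i a i * partial i g y)}.
  apply: differentiable_continuous.
  have -> : (fun y => \sum_i a i * partial i g y) = \sum_i a i *: partial i g.
    by apply/funext => y; rewrite fct_sumE.
  apply: differentiable_sum => i; apply: differentiableZ.
  exact/smooth_differentiable/smooth_partial.
have g0 := near_eq0_of_mulr_eq0 gG0 Gcont Gx0.
by apply: big1 => i _; rewrite partial_near_eq0 ?mulr0.
Qed.

End Smooth.

Section LiePoisson.
Variables (R : realType) (n : nat) (c : 'I_n -> 'I_n -> 'I_n -> R).
Hypothesis c_anti : forall i j k, c i j k = - c j i k.
Implicit Types (h : 'rV[R]_n -> R) (x : 'rV[R]_n).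

Lemma lie_poisson_antisym i j x : lie_poisson c i j x = - lie_poisson c j i x.
Proof.
by rewrite /lie_poisson -sumrN; apply: eq_bigr => k _; rewrite c_anti mulNr.
Qed.

Lemma is_derive_lie_poisson i j k x :
  is_derive x (delta_mx ord0 k) (lie_poisson c i j) (c i j k).
Proof.
have -> : c i j k = lie_poisson c i j (delta_mx ord0 k).
  rewrite /lie_poisson (bigD1 k) //= big1 => [|l lk].
    by rewrite /Defs.coord mxE !eqxx mulr1 addr0.
  by rewrite /Defs.coord mxE eqxx (negbTE lk) mulr0.
apply: is_derive_linear => a y z.
rewrite /lie_poisson scaler_sumr -big_split; apply: eq_bigr => l _.
by rewrite /Defs.coord !mxE mulrDr mulrCA.
Qed.

Lemma ham_vf_apply_self h x : vf_apply (ham_vf c h) h x = 0.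
Proof.
rewrite /vf_apply /ham_vf; under eq_bigr do rewrite mulr_suml.
rewrite exchange_big /=; under eq_bigr do under eq_bigr do rewrite -mulrA.
by apply: sum_antisym_sym => i j; [exact: lie_poisson_antisym | exact: mulrC].
Qed.

Lemma partial_ham_vf h j x : smooth h ->
  partial j (ham_vf c h j) x = \sum_i
    (lie_poisson c i j x * partial j (partial i h) x + c i j j * partial i h x).
Proof.
move=> sh; have dh i : derivable (partial i h) x (delta_mx ord0 j).
  exact/diff_derivable/smooth_differentiable/smooth_partial.
have -> : ham_vf c h j = \sum_i (lie_poisson c i j * partial i h).
  by apply/funext => y; rewrite fct_sumE.
rewrite /partial derive_sum => [|i]; last first.
  by apply: derivableM (dh i); case: (is_derive_lie_poisson i j j x).
apply: eq_bigr => i _; have [dpi Dpi] := is_derive_lie_poisson i j j x.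
rewrite deriveM; [|exact: dpi|exact: dh].
congr (_ + _); rewrite mulrC; congr (_ * _); exact: Dpi.
Qed.

Lemma divergence_ham_vf h x : smooth h ->
  divergence (ham_vf c h) x = \sum_i (\sum_j c i j j) * partial i h x.
Proof.
move=> sh; rewrite /divergence; under eq_bigr do rewrite partial_ham_vf // big_split.
rewrite big_split /= exchange_big /= sum_antisym_sym ?add0r.
- by rewrite exchange_big; apply: eq_bigr => i _; rewrite mulr_suml.
- by move=> i j; exact: lie_poisson_antisym.
- by move=> i j; exact: smooth_partialC.
Qed.

End LiePoisson.

Theorem proposition2p6 (R : realType) (n : nat)
  (c : 'I_n -> 'I_n -> 'I_n -> R) (f : 'rV[R]_n -> R) :
  lie_structure_constants c -> smooth f ->
  (last_multiplier (ham_vf c f) f <->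
   forall x : 'rV[R]_n, \sum_(i < n) \sum_(j < n) c i j j * partial i f x = 0).
Proof.
move=> [c_anti _] sf.
have multiplierE x : vf_apply (ham_vf c f) f x + f x * divergence (ham_vf c f) x
    = f x * \sum_i (\sum_j c i j j) * partial i f x.
  by rewrite ham_vf_apply_self // divergence_ham_vf // add0r.
have sumE x : \sum_i \sum_j c i j j * partial i f x
    = \sum_i (\sum_j c i j j) * partial i f x.
  by apply: eq_bigr => i _; rewrite mulr_suml.
split=> [last_f x | G0 x]; last by rewrite multiplierE -sumE G0 mulr0.
by rewrite sumE; apply: partial_comb_eq0 => // y; rewrite -multiplierE.
Qed.
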